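(* Let $P\subset V$ be a rational polyhedron invariant under translations by elements of a rational linear subspace $L_0$, and let $\sigma\in\Lambda_{\mathbb{Q}}$. Let $p=p(k,\lambda)$ be a quasi-polynomial function on $\mathbb{Z}\oplus\Lambda$ that is polynomial in $\lambda$, let $g\in\Lambda^\wedge_{\mathbb{Q}}$ and set $q(k,\lambda)=g^\lambda p(k,\lambda)$. If the restriction of $g$ to $\Lambda\cap L_0$ is a non-constant character, then $m=q[C_{P,\sigma}]$ satisfies $\mathcal{A}(m)=0$.
   Context: $V$ finite-dimensional real vector space, $\Lambda\subset V$ full-rank lattice, $\Lambda_{\mathbb{Q}}=\Lambda\otimes\mathbb{Q}$; a linear subspace $L_0$ is rational if $L_0\cap\Lambda$ has full rank in $L_0$. Rational polyhedron: finite intersection of half-spaces $\{v:\langle a,v\rangle\ge c\}$, $a\in\mathrm{Hom}(\Lambda,\mathbb{Z})\otimes\mathbb{Q}$, $c\in\mathbb{Q}$. $C_{P,\sigma}=\{(t,tv+\sigma):t>0,v\in P\}$, $[C_{P,\sigma}]$ its indicator on $\mathbb{Z}\oplus\Lambda$. Quasi-polynomials: algebra generated by polynomials and periodic functions on the lattice. $\Lambda^\wedge_{\mathbb{Q}}$: finite-order elements of $\mathrm{Hom}(\Lambda,U(1))$, $g^\lambda=g(\lambda)$. For such $m$, $\Theta(m;k)=\sum_\lambda m(k,\lambda)\delta_{\lambda/k}$ ($k\in\mathbb{Z}_{>0}$), and $\mathcal{A}(m)$ is its asymptotic expansion as $k\to\infty$ (locally, in powers of $k^{-1}$, coefficients periodic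 in $k$); $\mathcal{A}(m)=0$ means all coefficients vanish, equivalently $\langle\Theta(m;k),\varphi\rangle=o(k^{-N})$ for all $\varphi\in C^\infty_c(V)$ and all $N$. *)

From HB Require Import structures.
From mathcomp Require Import all_boot all_order all_algebra.
From mathcomp Require Import all_classical all_reals all_analysis.
From mathcomp Require Import complex.
Set Implicit Arguments. Unset Strict Implicit. Unset Printing Implicit Defensive.
Import Order.TTheory GRing.Theory Num.Theory.
Import numFieldNormedType.Exports.
Local Open Scope classical_set_scope.
Local Open Scope ring_scope.

Section Defs.
Variables (R : realType) (n : nat).
Local Notation V := 'rV[R]_n.
Local Notation Lam := 'rV[int]_n.
Local Notation C := (complex R).

Definition latv (l : Lam) : V := map_mx (fun z : int => z%:~R) l.

Definition Cof (x : R) : C := Complex x 0.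

Definition lin_subspace (L0 : set V) : Prop :=
  L0 0 /\ (forall u v, L0 u -> L0 v -> L0 (u + v)) /\
  (forall (a : R) v, L0 v -> L0 (a *: v)).

(* rational: L0 /\ Lambda has full rank in L0, i.e. spans L0 *)
Definition rational_subspace (L0 : set V) : Prop :=
  lin_subspace L0 /\
  exists (d : nat) (B : 'I_d -> Lam),
    (forall i, L0 (latv (B i))) /\
    forall v, L0 v -> exists c : 'I_d -> R, v = \sum_(i < d) c i *: latv (B i).

(* rational polyhedron: finite intersection of half-spaces <a,v> >= c,
   a in Hom(Lambda,Z) (x) Q = rational covectors, c rational *)
Definition rational_polyhedron (P : set V) : Prop :=
  exists (m : nat) (A : 'I_m -> 'rV[rat]_n) (c : 'I_m -> rat),
    P = [set v : V | forall i, ratr (c i) <= \sum_(j < n) ratr (A i 0 j) * v 0 j].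

(* indicator of C_{P,sigma} = {(t, t v + sigma) : t > 0, v in P} on Z (+) Lambda *)
Definition cone_ind (P : set V) (sigma : 'rV[rat]_n) (k : int) (l : Lam) : C :=
  if `[< exists (t : R) (v : V), 0 < t /\ P v /\
          (k%:~R = t) /\ latv l = t *: v + map_mx (fun q : rat => ratr q) sigma >]
  then 1 else 0.

(* periodic functions on the lattice Z (+) Lambda: invariant under a
   finite-index sublattice (equivalently under d(Z (+) Lambda), d > 0) *)
Definition periodic (f : int -> Lam -> C) : Prop :=
  exists d : nat, (0 < d)%N /\
    forall (k k' : int) (l mu : Lam), f (k + d%:Z * k') (l + d%:Z *: mu) = f k l.

Definition lmono (beta : 'rV[nat]_n) (l : Lam) : C :=
  \prod_(j < n) ((l 0 j)%:~R) ^+ (beta 0 j).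

(* quasi-polynomials on Z (+) Lambda: the algebra generated by polynomials and
   periodic functions, i.e. finite sums of (periodic) * (monomial) *)
Definition quasi_poly (p : int -> Lam -> C) : Prop :=
  exists (N : nat) (c : 'I_N -> int -> Lam -> C) (a : 'I_N -> nat)
         (beta : 'I_N -> 'rV[nat]_n),
    (forall i, periodic (c i)) /\
    forall k l, p k l = \sum_(i < N) c i k l * (k%:~R) ^+ (a i) * lmono (beta i) l.

Definition poly_in_lambda (p : int -> Lam -> C) : Prop :=
  forall k, exists (N : nat) (c : 'I_N -> C) (beta : 'I_N -> 'rV[nat]_n),
    forall l, p k l = \sum_(i < N) c i * lmono (beta i) l.

(* Lambda^_Q : finite-order elements of Hom(Lambda, U(1)) *)
Definition fin_order_char (g : Lam -> C) : Prop :=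
  (forall l mu, g (l + mu) = g l * g mu) /\
  (forall l, Normc.normc (g l) = 1) /\
  exists N : nat, (0 < N)%N /\ forall l, g l ^+ N = 1.

Fixpoint iter_deriv (vs : seq V) (f : V -> R) : V -> R :=
  match vs with
  | [::] => f
  | v :: vs' => fun x => derive (iter_deriv vs' f) x v
  end.

Definition test_function (phi : V -> R) : Prop :=
  (forall (vs : seq V), continuous (iter_deriv vs phi)) /\
  (forall (vs : seq V) (v x : V), derivable (iter_deriv vs phi) x v) /\
  compact (closure [set x | phi x != 0]).

Definition Theta_pair (m : int -> Lam -> C) (k : nat) (phi : V -> R) : C :=
  \sum_(l \in [set: Lam]) m k%:Z l * Cof (phi ((k%:R)^-1 *: latv l)).

(* A(m) = 0 : <Theta(m;k),phi> = o(k^-N) as k -> oo, for all phi and N *)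
Definition asymp_zero (m : int -> Lam -> C) : Prop :=
  forall phi : V -> R, test_function phi -> forall N : nat,
    forall eps : R, 0 < eps -> exists K : nat, forall k : nat, (K <= k)%N ->
      Normc.normc (Theta_pair m k phi) <= eps * ((k%:R) ^- N).

End Defs.

Arguments latv {R n} l.
Arguments Cof {R} x.

(* Choose s in Lambda ∩ L0 with g^(-s) <> 1, which exists because g is not
   constant on Lambda ∩ L0.  The cone C_{P,sigma} is invariant under
   translation by s, so summing by parts M times gives
     (g^(-s) - 1)^M <Theta(m;k), phi> = sum_lambda g^lambda (Delta_s^M F_k) lambda,
   where F_k lambda = p(k,lambda) [C_{P,sigma}](k,lambda) phi(lambda/k).
   Along a line lambda + j s the indicator is constant, p(k,.) is a polynomial
   of degree at most D in j (uniformly in k), and the j-th differences of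
   phi(lambda/k + j s/k) are O(k^-j).  By a discrete Leibniz rule each of the
   O(k^n) nonzero terms is O(k^(A + D') k^-(M - D)), where
   |p(k,lambda)| = O(k^A |lambda|^D'); taking M large gives
   <Theta(m;k), phi> = O(k^-N) for every N. *)

From Pilot Require Import Defs.
From mathcomp Require Import all_boot all_order all_algebra.
From mathcomp Require Import all_classical all_reals all_analysis.
From mathcomp Require Import complex finmap ring zify.
Set Implicit Arguments. Unset Strict Implicit. Unset Printing Implicit Defensive.
Import Order.TTheory GRing.Theory Num.Theory.
Import numFieldNormedType.Exports.
Local Open Scope classical_set_scope.
Local Open Scope ring_scope.

Section ForwardDifference.
Variable M : zmodType.
Implicit Types u v : nat -> M.

Definition fdiff u : nat -> M := fun j => u j.+1 - u j.
Definition fdiffn (m : nat) u : nat -> M := iter m fdiff u.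

Lemma fdiffnSr m u : fdiffn m.+1 u = fdiffn m (fdiff u).
Proof. exact: iterSr. Qed.

Lemma fdiffn_addn m1 m2 u : fdiffn (m1 + m2) u = fdiffn m1 (fdiffn m2 u).
Proof. exact: iterD. Qed.

Lemma fdiffn_succ m u j : fdiffn m (fun i => u i.+1) j = fdiffn m u j.+1.
Proof. by elim: m j => [|m ih] j //=; rewrite /fdiff !ih. Qed.

Lemma fdiffnD m u v j :
  fdiffn m (fun i => u i + v i) j = fdiffn m u j + fdiffn m v j.
Proof. by elim: m j => [|m ih] j //=; rewrite /fdiff !ih addrACA opprD. Qed.

Lemma fdiffn0 m j : fdiffn m (fun=> 0 : M) j = 0.
Proof. by elim: m j => [|m ih] j //=; rewrite /fdiff !ih subrr. Qed.

End ForwardDifference.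

Lemma fdiffn_additive (M M' : zmodType) (f : {additive M -> M'}) m u j :
  fdiffn m (f \o u) j = f (fdiffn m u j).
Proof. by elim: m j => [|m ih] j //=; rewrite /fdiff !ih raddfB. Qed.

Section PolynomialSequences.
Variable K : comRingType.
Implicit Types u v : nat -> K.

Definition deg_le (a : nat) u := forall j, fdiffn a.+1 u j = 0.

Lemma fdiffnZ m c u j : fdiffn m (fun i => c * u i) j = c * fdiffn m u j.
Proof. by elim: m j => [|m ih] j //=; rewrite /fdiff !ih mulrBr. Qed.

Lemma fdiffM u v :
  fdiff (fun j => u j * v j) = (fun j => u j.+1 * fdiff v j + fdiff u j * v j).
Proof. by apply/funext => j; rewrite /fdiff; ring. Qed.

Lemma deg_le_fdiffn a u i j : deg_le a u -> (a < i)%N -> fdiffn i u j = 0.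
Proof.
move=> hu ai; rewrite -(subnK ai) fdiffn_addn.
by rewrite (_ : fdiffn a.+1 u = fun=> 0) ?fdiffn0 //; apply/funext.
Qed.

Lemma deg_le_leq a b u : (a <= b)%N -> deg_le a u -> deg_le b u.
Proof. by move=> ab hu j; apply: deg_le_fdiffn hu _; rewrite ltnS. Qed.

Lemma deg_le_fdiff a u : deg_le a.+1 u -> deg_le a (fdiff u).
Proof. by move=> hu j; rewrite -fdiffnSr. Qed.

Lemma deg_le_shift a u : deg_le a u -> deg_le a (fun j => u j.+1).
Proof. by move=> hu j; rewrite fdiffn_succ. Qed.

Lemma deg_le0_fdiff u : deg_le 0 u -> fdiff u = fun=> 0.
Proof. by move=> hu; apply/funext => j; apply: hu. Qed.

Lemma deg_le_cst c : deg_le 0 (fun=> c).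
Proof. by move=> j; rewrite /= /fdiff subrr. Qed.

Lemma deg_leD a u v : deg_le a u -> deg_le a v -> deg_le a (fun j => u j + v j).
Proof. by move=> hu hv j; rewrite fdiffnD hu hv addr0. Qed.

Lemma deg_leZ a c u : deg_le a u -> deg_le a (fun j => c * u j).
Proof. by move=> hu j; rewrite fdiffnZ hu mulr0. Qed.

Lemma deg_le_lin x y : deg_le 1 (fun j => x + y * j%:R).
Proof. by move=> j; rewrite /= /fdiff !mulrS; ring. Qed.

Lemma fdiffnM_eq0 m a b u v : deg_le a u -> deg_le b v -> (a + b < m)%N ->
  forall j, fdiffn m (fun j => u j * v j) j = 0.
Proof.
elim: m a b u v => [|m ih] a b u v hu hv // abm j.
rewrite fdiffnSr fdiffM fdiffnD.
have -> : fdiffn m (fun j => u j.+1 * fdiff v j) j = 0.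
  case: b hv abm => [|b] hv abm.
    by rewrite deg_le0_fdiff // (_ : (fun j => _) = fun=> 0) ?fdiffn0 //;
      apply/funext => i; rewrite mulr0.
  by apply: (ih a b _ _ (deg_le_shift hu) (deg_le_fdiff hv)); lia.
have -> : fdiffn m (fun j => fdiff u j * v j) j = 0.
  case: a hu abm => [|a] hu abm.
    by rewrite deg_le0_fdiff // (_ : (fun j => _) = fun=> 0) ?fdiffn0 //;
      apply/funext => i; rewrite mul0r.
  by apply: (ih a b _ _ (deg_le_fdiff hu) hv); lia.
by rewrite addr0.
Qed.

Lemma deg_leM a b u v :
  deg_le a u -> deg_le b v -> deg_le (a + b) (fun j => u j * v j).
Proof. by move=> hu hv; apply: fdiffnM_eq0 hu hv _. Qed.

Lemma deg_leX a u m : deg_le a u -> deg_le (a * m) (fun j => u j ^+ m).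
Proof.
move=> hu; elim: m => [|m ih]; first by rewrite muln0; apply: deg_le_cst.
rewrite mulnS (_ : (fun j => _) = fun j => u j * u j ^+ m).
  exact: deg_leM.
by apply/funext => j; rewrite exprS.
Qed.

Lemma deg_le_prod (I : Type) (r : seq I) (d : I -> nat) (w : I -> nat -> K) :
  (forall i, deg_le (d i) (w i)) ->
  deg_le (\sum_(i <- r) d i) (fun j => \prod_(i <- r) w i j).
Proof.
move=> hw; elim: r => [|i r ih].
  rewrite big_nil (_ : (fun j => _) = fun=> 1); first exact: deg_le_cst.
  by apply/funext => j; rewrite big_nil.
rewrite big_cons (_ : (fun j => _) = fun j => w i j * \prod_(i <- r) w i j).
  exact: deg_leM.
by apply/funext => j; rewrite big_cons.
Qed.

Lemma deg_le_sum (I : Type) (r : seq I) a (w : I -> nat -> K) :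
  (forall i, deg_le a (w i)) -> deg_le a (fun j => \sum_(i <- r) w i j).
Proof.
move=> hw; elim: r => [|i r ih].
  rewrite (_ : (fun j => _) = fun=> 0) => [j|]; first exact: fdiffn0.
  by apply/funext => j; rewrite big_nil.
rewrite (_ : (fun j => _) = fun j => w i j + \sum_(i <- r) w i j).
  exact: deg_leD.
by apply/funext => j; rewrite big_cons.
Qed.

End PolynomialSequences.

Section ComplexModulus.
Variable R : realType.
Local Notation C := (complex R).
Local Notation normc := (@Normc.normc R).

Lemma normc_ge0 (z : C) : 0 <= normc z.
Proof. by case: z => a b /=; rewrite sqrtr_ge0. Qed.

Lemma normcB_le (x y : C) : normc (x - y) <= normc x + normc y.
Proof. by rewrite -(normcN y); apply: le_normcD. Qed.

Lemma normc_eq0 (z : C) : (normc z == 0) = (z == 0).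
Proof. by apply/eqP/eqP => [/Normc.eq0_normc | ->]; last exact: Normc.normc0. Qed.

Lemma normc_sum_le (I : Type) (r : seq I) (P : pred I) (F : I -> C) :
  normc (\sum_(i <- r | P i) F i) <= \sum_(i <- r | P i) normc (F i).
Proof.
apply: (big_ind2 (fun x y => normc x <= y)); first by rewrite Normc.normc0.
  by move=> x1 x2 y1 y2 h1 h2; apply: le_trans (le_normcD _ _) (lerD h1 h2).
by [].
Qed.

Lemma normc_prod (I : Type) (r : seq I) (P : pred I) (F : I -> C) :
  normc (\prod_(i <- r | P i) F i) = \prod_(i <- r | P i) normc (F i).
Proof. apply: (big_morph normc); [exact: Normc.normcM | exact: Normc.normc1]. Qed.

Lemma normcX (z : C) m : normc (z ^+ m) = normc z ^+ m.
Proof. by elim: m => [|m ih]; rewrite ?Normc.normc1 // !exprS Normc.normcM ih. Qed.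

Lemma normc_Cof (x : R) : normc (Cof x) = `|x|.
Proof. by rewrite /= expr0n /= addr0 sqrtr_sqr. Qed.

Lemma normc_int (z : int) : normc (z%:~R : C) = (`|z|%:~R : R).
Proof.
have -> : (z%:~R : C) = Cof z%:~R by rewrite -(rmorph_int (real_complex R)).
by rewrite normc_Cof -intr_norm.
Qed.

Lemma Cof0 : Cof 0 = 0 :> C.
Proof. exact: (raddf0 (real_complex R)). Qed.

Lemma fdiffn_Cof (u : nat -> R) m j :
  fdiffn m (fun i => Cof (u i)) j = Cof (fdiffn m u j).
Proof. exact: (fdiffn_additive (real_complex R)). Qed.

Lemma normc_fdiffn_le (u : nat -> C) (T : nat) (U : R) :
  (forall j, (j <= T)%N -> normc (u j) <= U) ->
  forall i j, (i + j <= T)%N -> normc (fdiffn i u j) <= 2 ^+ i * U.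
Proof.
move=> hu; elim=> [|i ih] j hij; first by rewrite mul1r; apply: hu.
rewrite /= /fdiff; apply: le_trans (normcB_le _ _) _.
by rewrite exprS -mulrA mulr2n mulrDl mul1r; apply: lerD; apply: ih; lia.
Qed.

(* Discrete Leibniz estimate: each forward difference falling on [v] gains a
   factor [e], and at most [D] of them may fall on the polynomial [u]. *)
Lemma normc_fdiffnM_le (M D T : nat) (U V e : R) (u v : nat -> C) :
  0 <= U -> 0 <= V -> 0 <= e <= 1 -> deg_le D u ->
  (forall i j, (i + j <= T)%N -> normc (fdiffn i u j) <= U) ->
  (forall i j, (i + j <= T)%N -> normc (fdiffn i v j) <= V * e ^+ i) ->
  forall j, (M + j <= T)%N ->
  normc (fdiffn M (fun j => u j * v j) j) <= 2 ^+ M * U * V * e ^+ (M - D).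
Proof.
move=> U0 + /andP [e0 e1].
elim: M D T V u v => [|M ih] D T V u v V0 hu hU hV j hj.
  rewrite Normc.normcM mul1r expr0 mulr1; apply: ler_pM; rewrite ?normc_ge0 //.
    exact: (hU 0%N).
  by rewrite -[V]mulr1 -(expr0 e); apply: (hV 0%N).
case: T hU hV hj => [|T] hU hV hj; first by rewrite addSn in hj.
rewrite fdiffnSr fdiffM fdiffnD; apply: le_trans (le_normcD _ _) _.
have -> : 2 ^+ M.+1 * U * V * e ^+ (M.+1 - D) =
    2 ^+ M * U * V * e ^+ (M.+1 - D) + 2 ^+ M * U * V * e ^+ (M.+1 - D).
  by rewrite exprS; ring.
apply: lerD.
  have Ve0 : 0 <= V * e by rewrite mulr_ge0.
  apply: le_trans (ih D T (V * e) _ _ Ve0 (deg_le_shift hu) _ _ j _) _.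
  - by move=> i k hik; rewrite fdiffn_succ; apply: hU; lia.
  - by move=> i k hik; rewrite -fdiffnSr -mulrA -exprS; apply: hV; lia.
  - lia.
  rewrite -!mulrA -exprS; do 3!apply: ler_wpM2l => //; rewrite ?exprn_ge0 //.
  by apply: ler_wiXn2l => //; lia.
case: D hu => [|D] hu.
  rewrite deg_le0_fdiff // (_ : (fun j => _) = fun=> 0); last first.
    by apply/funext => i; rewrite mul0r.
  by rewrite fdiffn0 Normc.normc0 !mulr_ge0 ?exprn_ge0.
rewrite subSS; apply: (ih D T V _ _ V0 (deg_le_fdiff hu)).
- by move=> i k hik; rewrite -fdiffnSr; apply: hU; lia.
- by move=> i k hik; apply: hV; lia.
- lia.
Qed.

End ComplexModulus.

Section SmoothAlongLines.
Variable R : realType.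

Lemma is_derive_line_transfer (V1 V2 W : normedModType R) (f : V1 -> W)
    (g : V2 -> W) (a v : V1) (b w : V2) (d : W) :
  (forall h : R, f (h *: v + a) = g (h *: w + b)) ->
  is_derive b w g d -> is_derive a v f d.
Proof.
move=> fg [dg <-].
have E : (fun h : R => h^-1 *: ((f \o shift a) (h *: v) - f a)) =
         (fun h : R => h^-1 *: ((g \o shift b) (h *: w) - g b)).
  by apply/funext => h /=; rewrite fg -[in f a](add0r a) -(scale0r v) fg !scale0r !add0r.
by apply: DeriveDef; rewrite /derivable /derive E.
Qed.

(* By the mean value theorem, each difference with step [e] costs a factor [e]
   and one derivative. *)
Lemma fdiffn_smooth_le (fs : nat -> R -> R) (B : nat -> R) (e : R) :
  (forall m (t : R), is_derive t (1 : R) (fs m) (fs m.+1 t)) ->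
  (forall m t, `|fs m t| <= B m) -> 0 <= e ->
  forall b m t0 j,
  `|fdiffn b (fun j => fs m (t0 + j%:R * e)) j| <= e ^+ b * B (m + b)%N.
Proof.
move=> + + e0 b; elim: b fs B => [|b ih] fs B dfs hB m t0 j.
  by rewrite expr0 mul1r addn0; apply: hB.
pose hs i x := fs i (x + e) - fs i x.
have dhs i (x : R) : is_derive x (1 : R) (hs i) (hs i.+1 x).
  have dsh : is_derive x (1 : R) (fs i \o shift e) (fs i.+1 (x + e)).
    by apply: is_derive_line_transfer (dfs i (x + e)) => h /=; rewrite addrA.
  by rewrite (_ : hs i = fs i \o shift e - fs i); [exact: is_deriveB | apply/funext].
have hhs i x : `|hs i x| <= e * B i.+1.
  have xe : x <= x + e by rewrite lerDl.
  rewrite /hs; have [c _ ->] := MVT_segment xe (fun y _ => dfs i y)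
    (derivable_within_continuous (fun y _ => @ex_derive _ _ _ _ _ _ _ (dfs i y))).
  by rewrite addrAC subrr add0r normrM (ger0_norm e0) mulrC ler_wpM2l.
rewrite fdiffnSr (_ : fdiff _ = fun j => hs m (t0 + j%:R * e)); last first.
  by apply/funext => i; rewrite /fdiff /hs mulrSr mulrDl mul1r addrA.
apply: le_trans (ih hs (fun m => e * B m.+1) dhs hhs m t0 j) _.
by rewrite exprSr -mulrA addnS.
Qed.

Variable n : nat.
Local Notation V := 'rV[R]_n.

Lemma iter_deriv_out_supp (phi : V -> R) vs x :
  ~ closure [set y | phi y != 0] x -> iter_deriv vs phi x = 0.
Proof.
elim: vs x => [|v vs ih] x hx /=.
  by apply/eqP; apply: contra_notT hx => nz; apply: subset_closure.
have : nbhs x (~` closure [set y | phi y != 0]).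
  by apply: open_nbhs_nbhs; split => //; apply: closed_openC; apply: closed_closure.
move=> /nbhs_ballP [r r0 hr].
suff cst0 : (fun k : R => k^-1 *: ((iter_deriv vs phi \o shift x) (k *: v)
    - iter_deriv vs phi x)) @ 0^' --> (0 : R) by apply: cvg_lim cst0.
apply: cvg_near_cst; near=> k.
have hk : `|k| * (`|v| + 1) < r.
  rewrite -ltr_pdivlMr ?ltr_wpDl //; near: k.
  by apply: dnbhs0_lt; rewrite divr_gt0 ?ltr_wpDl.
rewrite /= (ih x hx) (ih (k *: v + x)) ?subrr ?scaler0 //; apply: hr.
rewrite -ball_normE /ball_ /= opprD addrCA subrr addr0 normrN normrZ.
by apply: le_lt_trans hk; rewrite ler_wpM2l // lerDl.
Unshelve. all: by end_near.
Qed.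

Lemma iter_deriv_bounded (phi : V -> R) vs :
  test_function phi -> exists B, forall x, `|iter_deriv vs phi x| <= B.
Proof.
move=> [cont [_ supp_cpt]].
have [[c0 Kc0]|K0] := pselect (closure [set y | phi y != 0] !=set0); last first.
  by exists 0 => x; rewrite iter_deriv_out_supp ?normr0 // => Kx; apply: K0; exists x.
have cf : {within closure [set y | phi y != 0],
    continuous (fun x => `|iter_deriv vs phi x|)}.
  by apply: continuous_subspaceT => x; apply: continuous_comp (cont vs x) _;
    apply: norm_continuous.
have [c _ cmax] := compact_EVT_max (ex_intro _ c0 Kc0) supp_cpt cf.
exists `|iter_deriv vs phi c| => x.
have [Kx|nKx] := pselect (closure [set y | phi y != 0] x).
  exact/cmax/mem_set.
by rewrite iter_deriv_out_supp // normr0.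
Qed.

Lemma test_function_fdiffn_le (phi : V -> R) (h : V) (M : nat) :
  test_function phi ->
  exists2 B : R, 0 <= B & forall b (x0 : V) e j, (b <= M)%N -> 0 <= e ->
    `|fdiffn b (fun j => phi (x0 + (j%:R * e) *: h)) j| <= e ^+ b * B.
Proof.
move=> tf; have /choice [Bd hBd] : forall m, exists B,
    forall x, `|iter_deriv (nseq m h) phi x| <= B.
  by move=> m; apply: iter_deriv_bounded.
exists (\sum_(i < M.+1) `|Bd i|); first exact: sumr_ge0.
move=> b x0 e j bM e0.
pose fs m (t : R) := iter_deriv (nseq m h) phi (x0 + t *: h).
have dfs m (t : R) : is_derive t (1 : R) (fs m) (fs m.+1 t).
  apply: (is_derive_line_transfer (b := x0 + t *: h) (w := h)).
    by move=> k; rewrite /fs -[k *: 1]/(k * 1) mulr1 scalerDl addrCA.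
  exact/derivableP/tf.2.1.
have := fdiffn_smooth_le dfs (fun m t => hBd m _) e0 b 0 0 j.
rewrite add0n (_ : (fun j => fs 0%N (0 + j%:R * e)) =
    fun j => phi (x0 + (j%:R * e) *: h)).
  move/le_trans; apply; apply: ler_wpM2l; first exact: exprn_ge0.
  apply: le_trans (ler_norm _) _.
  by rewrite (bigD1 (Ordinal (bM : (b < M.+1)%N))) //= lerDl sumr_ge0.
by apply/funext => i; rewrite add0r.
Qed.

End SmoothAlongLines.

Section LatticeDifference.
Variables (Z : zmodType) (K : idomainType).
Implicit Types (G H : Z -> K) (s l : Z).

Definition ldiff s G : Z -> K := fun l => G (l + s) - G l.
Definition ldiffn m s G : Z -> K := iter m (ldiff s) G.

Lemma ldiffn_line m s G l j :
  ldiffn m s G (l + s *+ j) = fdiffn m (fun i => G (l + s *+ i)) j.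
Proof. by elim: m j => [|m ih] j //=; rewrite /ldiff /fdiff -!ih mulrSr addrA. Qed.

Lemma ldiffn_neq0 m s G l :
  ldiffn m s G l != 0 -> exists2 j, (j <= m)%N & G (l + s *+ j) != 0.
Proof.
elim: m l => [|m ih] l /=; first by exists 0%N; rewrite ?mulr0n ?addr0.
rewrite /ldiff; have [h0|/ih [j jm Gj]] := eqVneq (ldiffn m s G (l + s)) 0.
  by rewrite h0 sub0r oppr_eq0 => /ih [j jm Gj]; exists j => //; apply: leqW.
by exists j.+1; rewrite // mulrS addrA.
Qed.

Lemma finite_supp_shift G s : finite_set [set l | G l != 0] ->
  finite_set [set l | G (l + s) != 0].
Proof.
move=> fG; apply: sub_finite_set (finite_image (fun l => l - s) fG).
by move=> l Gl; exists (l + s) => //; rewrite addrK.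
Qed.

Lemma finite_supp_ldiffn m s G : finite_set [set l | G l != 0] ->
  finite_set [set l | ldiffn m s G l != 0].
Proof.
move=> fG; elim: m => [|m ih] //=.
apply: sub_finite_set (_ : _ `<=` [set l | ldiffn m s G (l + s) != 0] `|`
    [set l | ldiffn m s G l != 0]) _.
  move=> l; rewrite /= /ldiff -/(ldiffn m s G).
  have [->|] := eqVneq (ldiffn m s G (l + s)) 0; last by left.
  by rewrite sub0r oppr_eq0; right.
by rewrite finite_setU; split => //; apply: finite_supp_shift.
Qed.

Lemma fsumB G H : finite_set [set l | G l != 0] -> finite_set [set l | H l != 0] ->
  \sum_(l \in [set: Z]) (G l - H l) =
  \sum_(l \in [set: Z]) G l - \sum_(l \in [set: Z]) H l.
Proof.
move=> fG fH; set A := fset_set ([set l | G l != 0] `|` [set l | H l != 0]).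
have outA l : l \notin A -> G l = 0 /\ H l = 0.
  rewrite in_fset_set ?finite_setU // notin_setE /= => /not_orP [].
  by move=> /negP; rewrite negbK => /eqP -> /negP; rewrite negbK => /eqP ->.
rewrite (fsbigTE A) => [|l /outA [-> ->]]; last by rewrite subrr.
rewrite (fsbigTE A G) => [|l /outA []] //; rewrite (fsbigTE A H) => [|l /outA []] //.
by rewrite sumrB.
Qed.

Variable g : Z -> K.
Hypothesis gM : forall l mu, g (l + mu) = g l * g mu.

Lemma fsum_ldiff G s : finite_set [set l | G l != 0] ->
  \sum_(l \in [set: Z]) g l * ldiff s G l =
  (g (- s) - 1) * \sum_(l \in [set: Z]) g l * G l.
Proof.
move=> fG; rewrite (eq_fsbigr (fun l => g l * G (l + s) - g l * G l)); last first.
  by move=> l _; rewrite /ldiff mulrBr.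
rewrite fsumB; first last.
- by apply: sub_finite_set fG => l /=; rewrite mulf_eq0 negb_or => /andP [].
- apply: sub_finite_set (finite_supp_shift s fG) => l /=.
  by rewrite mulf_eq0 negb_or => /andP [].
rewrite mulrBl mul1r mulr_fsumr (reindex_fsbigT (fun l => l - s)); last first.
  by exists (fun l => l + s) => l; rewrite ?subrK ?addrK.
by congr (_ - _); apply: eq_fsbigr => l _; rewrite subrK gM mulrCA mulrA.
Qed.

Lemma fsum_ldiffn m G s : finite_set [set l | G l != 0] ->
  \sum_(l \in [set: Z]) g l * ldiffn m s G l =
  (g (- s) - 1) ^+ m * \sum_(l \in [set: Z]) g l * G l.
Proof.
move=> fG; elim: m => [|m ih]; first by rewrite mul1r.
have -> : ldiffn m.+1 s G = ldiff s (ldiffn m s G) by [].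
rewrite fsum_ldiff; last exact: finite_supp_ldiffn.
by rewrite ih exprS mulrA.
Qed.

End LatticeDifference.

Section LatticeBox.
Variables (R : realType) (n : nat).
Local Notation Lam := 'rV[int]_n.

Definition inbox (K : nat) (l : Lam) := forall t, `|l 0 t| <= K%:Z.

Definition box (K : nat) : seq Lam :=
  [seq \row_t ((f t : nat)%:Z - K%:Z) | f : {ffun 'I_n -> 'I_(K.*2.+1)}].

Lemma size_box K : size (box K) = (K.*2.+1 ^ n)%N.
Proof. by rewrite size_image card_ffun !card_ord. Qed.

Lemma inboxP K l : inbox K l -> l \in box K.
Proof.
move=> lK; have ord t : (absz (l 0%R t + K%:Z)%R < K.*2.+1)%N.
  by have := lK t; rewrite -ltz_nat ler_norml -addnn; lia.
apply/fintype.imageP; exists [ffun t => Ordinal (ord t)] => //.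
apply/rowP => t; rewrite mxE ffunE /= gez0_abs ?addrK //.
by have := lK t; rewrite ler_norml; lia.
Qed.

Lemma finite_inbox K : finite_set [set l | inbox K l].
Proof. by apply: sub_finite_set (finite_seq (box K)) => l /inboxP. Qed.

Lemma normc_fsum_box_le (H : Lam -> complex R) K (B : R) : 0 <= B ->
  (forall l, ~ inbox K l -> H l = 0) -> (forall l, inbox K l -> Normc.normc (H l) <= B) ->
  Normc.normc (\sum_(l \in [set: Lam]) H l) <= (K.*2.+1 ^ n)%:R * B.
Proof.
move=> B0 Hout HB; rewrite (fsbigE (undup (box K))) ?undup_uniq //; last first.
  by move=> l _; rewrite mem_undup; apply: contraNeq => /eqP nz; apply/inboxP;
    apply: contra_notP nz => /Hout.
apply: le_trans (normc_sum_le _ _ _) _.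
apply: le_trans (_ : _ <= \sum_(l <- undup (box K)) B) _.
  rewrite big_mkcond /=; apply: ler_sum => l _; case: ifP => _ //.
  have [lK|nlK] := pselect (inbox K l); first exact: HB.
  by rewrite Hout ?Normc.normc0.
rewrite big_const_seq count_predT iter_addr_0 -[B *+ _]mulr_natl -size_box.
by rewrite ler_wpM2r // ler_nat size_undup.
Qed.

End LatticeBox.

Lemma poly_eq0_on_multiples (K : numDomainType) (q : {poly K}) (d : nat) :
  (0 < d)%N -> (forall j, q.[(d * j)%:R] = 0) -> q = 0.
Proof.
move=> d0 qdj; apply/eqP; apply: contraT => q0.
have := @max_poly_roots _ q [seq (d * j)%:R | j <- iota 0 (size q)] q0.
rewrite size_map size_iota ltnn; apply.
  by apply/allP => _ /mapP [j _ ->]; apply/eqP.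
by rewrite map_inj_uniq ?iota_uniq // => i j /eqP; rewrite eqr_nat eqn_pmul2l // => /eqP.
Qed.

Section QuasiPolynomials.
Variables (R : realType) (n : nat).
Local Notation C := (complex R).
Local Notation Lam := 'rV[int]_n.
Local Notation normc := (@Normc.normc R).

Lemma periodic_bounded (c : int -> Lam -> C) : Defs.periodic c ->
  exists2 B : R, 0 <= B & forall k l, normc (c k l) <= B.
Proof.
move=> [d [d0 cper]]; have dZ0 : d%:Z != 0 by rewrite eqz_nat -lt0n.
have mod_lt z : (absz (z %% d%:Z)%Z < d)%N.
  by rewrite -ltz_nat gez0_abs ?modz_ge0 ?ltz_pmod.
pose res (x : 'I_d * {ffun 'I_n -> 'I_d}) :=
  normc (c (x.1 : nat)%:Z (\row_t (x.2 t : nat)%:Z)).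
exists (\sum_x res x); first by apply: sumr_ge0 => x _; apply: normc_ge0.
move=> k l; pose x := (Ordinal (mod_lt k), [ffun t => Ordinal (mod_lt (l 0 t))]).
have -> : c k l = c (x.1 : nat)%:Z (\row_t (x.2 t : nat)%:Z).
  symmetry; rewrite -(cper _ (k %/ d%:Z)%Z _ (\row_t (l 0%R t %/ d%:Z)%Z)).
  congr (c _ _); first by rewrite /= gez0_abs ?modz_ge0 // addrC mulrC -divz_eq.
  by apply/rowP => t; rewrite !mxE ffunE /= gez0_abs ?modz_ge0 // addrC mulrC -divz_eq.
by rewrite (bigD1 x) //= lerDl sumr_ge0 // => y _; apply: normc_ge0.
Qed.

Lemma periodic_common (N : nat) (c : 'I_N -> int -> Lam -> C) :
  (forall i, Defs.periodic (c i)) ->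
  exists2 d, (0 < d)%N & forall i k l s j, c i k (l + s *+ (d * j)) = c i k l.
Proof.
move=> /choice [d hd]; exists (\prod_i d i)%N.
  by rewrite prodn_gt0 // => i; case: (hd i).
move=> i k l s j; have /dvdnP [q ->] : (d i %| \prod_i d i)%N.
  by rewrite (bigD1 i) ?dvdn_mulr.
have := (hd i).2 k 0 l (s *+ (q * j)); rewrite mulr0 addr0 => <-.
by rewrite -natz scaler_nat -mulrnA mulnAC.
Qed.

Definition line_poly (l s : Lam) (beta : 'rV[nat]_n) : {poly C} :=
  \prod_(t < n) (((l 0 t)%:~R : C)%:P + ((s 0 t)%:~R : C) *: 'X) ^+ beta 0 t.

Lemma lmono_line (beta : 'rV[nat]_n) (l s : Lam) j :
  lmono R beta (l + s *+ j) = (line_poly l s beta).[j%:R].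
Proof.
rewrite /lmono horner_prod; apply: eq_bigr => t _.
rewrite horner_exp hornerD hornerC hornerZ hornerX mxE mulmxnE intrD.
by rewrite -[s 0 t *+ j]mulr_natr intrM natz -pmulrn mulr_natr.
Qed.

Lemma deg_le_line_poly (l s : Lam) (beta : 'rV[nat]_n) :
  deg_le (\sum_(t < n) beta 0%R t) (fun j => (line_poly l s beta).[j%:R]).
Proof.
rewrite (_ : (fun j => _) = fun j => \prod_(t < n)
    (((l 0 t)%:~R : C) + (s 0 t)%:~R * j%:R) ^+ beta 0 t); last first.
  apply/funext => j; rewrite horner_prod; apply: eq_bigr => t _.
  by rewrite horner_exp hornerD hornerC hornerZ hornerX.
apply: deg_le_prod => t.
by have := deg_leX (beta 0 t) (deg_le_lin ((l 0 t)%:~R : C) (s 0 t)%:~R); rewrite mul1n.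
Qed.

(* [poly_in_lambda] only gives, for each [k], some polynomial in [lambda]; its
   degree along a line is bounded uniformly in [k] because it must agree with
   the quasi-polynomial expression on an arithmetic progression. *)
Lemma quasi_poly_line_deg (p : int -> Lam -> C) :
  quasi_poly p -> poly_in_lambda p ->
  exists D, forall k l s, deg_le D (fun j => p k (l + s *+ j)).
Proof.
move=> [N [c [a [beta [cper pE]]]]] ppoly.
exists (\max_(i < N) \sum_(t < n) beta i 0%R t)%N => k l s.
have [d d0 cd] := periodic_common cper.
have [N' [c' [beta' p'E]]] := ppoly k.
pose U := \sum_(i < N') c' i *: line_poly l s (beta' i).
pose Q := \sum_(i < N) (c i k l * k%:~R ^+ a i) *: line_poly l s (beta i).
have pU j : p k (l + s *+ j) = U.[j%:R].
  by rewrite p'E horner_sum; apply: eq_bigr => i _; rewrite hornerZ lmono_line.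
have UQ : U = Q.
  apply/eqP; rewrite -subr_eq0; apply/eqP/(poly_eq0_on_multiples d0) => j.
  rewrite hornerD hornerN -pU pE horner_sum; apply/eqP; rewrite subr_eq0; apply/eqP.
  by apply: eq_bigr => i _; rewrite hornerZ cd lmono_line.
rewrite (_ : (fun j => _) = fun j => Q.[j%:R]); last by apply/funext => j; rewrite pU UQ.
rewrite (_ : (fun j => _) = fun j => \sum_(i < N) (c i k l * k%:~R ^+ a i) *
    (line_poly l s (beta i)).[j%:R]); last first.
  by apply/funext => j; rewrite horner_sum; apply: eq_bigr => i _; rewrite hornerZ.
apply: deg_le_sum => i; apply/deg_leZ/(deg_le_leq _ (deg_le_line_poly l s (beta i))).
exact: (leq_bigmax (F := fun i => \sum_(t < n) beta i 0%R t)%N).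
Qed.

Lemma quasi_poly_bounded (p : int -> Lam -> C) : quasi_poly p ->
  exists (B : R) (A D : nat), 0 <= B /\ forall (k K : nat) (l : Lam),
    (0 < k)%N -> (0 < K)%N -> inbox K l ->
    normc (p k%:Z l) <= B * k%:R ^+ A * K%:R ^+ D.
Proof.
move=> [N [c [a [beta [cper pE]]]]].
have /choice [Bc hBc] : forall i, exists B : R,
    0 <= B /\ forall k l, normc (c i k l) <= B.
  by move=> i; have [B B0 cB] := periodic_bounded (cper i); exists B.
exists (\sum_i Bc i), (\max_(i < N) a i)%N, (\max_(i < N) \sum_(t < n) beta i 0%R t)%N.
split=> [|k K l k0 K0 lK]; first by apply: sumr_ge0 => i _; case: (hBc i).
rewrite pE; apply: le_trans (normc_sum_le _ _ _) _.
rewrite !mulr_suml; apply: ler_sum => i _; rewrite !Normc.normcM.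
have [Bc0 cB] := hBc i; apply: ler_pM; rewrite ?mulr_ge0 ?normc_ge0 //.
  apply: ler_pM; rewrite ?normc_ge0 //.
  rewrite normcX normc_int /= ler_weXn2l ?ler1n //.
  exact: (leq_bigmax (F := a) i).
rewrite /lmono normc_prod (le_trans (_ : _ <= \prod_(t < n) K%:R ^+ beta i 0 t)) //.
  apply: ler_prod => t _; rewrite normcX normc_int exprn_ge0 ?ler0z //=.
  by rewrite lerXn2r ?nnegrE ?ler0z ?ler0n // [K%:R]pmulrn ler_int.
rewrite prodrXr ler_weXn2l ?ler1n //.
exact: (leq_bigmax (F := fun i => \sum_(t < n) beta i 0%R t)%N i).
Qed.

End QuasiPolynomials.

Section Cone.
Variables (R : realType) (n : nat).
Local Notation V := 'rV[R]_n.
Local Notation Lam := 'rV[int]_n.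

Lemma latvD (a b : Lam) : latv (a + b) = latv a + latv b :> V.
Proof. by apply/rowP => t; rewrite !mxE intrD. Qed.

Lemma latvN (a : Lam) : latv (- a) = - latv a :> V.
Proof. by apply/rowP => t; rewrite !mxE intrN. Qed.

Lemma latvMn (a : Lam) j : latv (a *+ j) = latv a *+ j :> V.
Proof.
apply/rowP => t; rewrite mulmxnE !mxE mulmxnE -[a 0 t *+ j]mulr_natr intrM natz.
by rewrite -pmulrn mulr_natr.
Qed.

Lemma lin_subspaceN (L0 : set V) v : lin_subspace L0 -> L0 v -> L0 (- v).
Proof. by move=> [_ [_ LZ]] Lv; rewrite -scaleN1r; apply: LZ. Qed.

Lemma lin_subspaceB (L0 : set V) u v : lin_subspace L0 -> L0 u -> L0 v -> L0 (u - v).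
Proof.
by move=> L0lin Lu Lv; case: (L0lin) => _ [LD _]; apply: LD Lu (lin_subspaceN L0lin Lv).
Qed.

Section Invariance.
Variables (P L0 : set V) (sigma : 'rV[rat]_n).
Hypothesis L0_lin : lin_subspace L0.
Hypothesis P_L0 : forall v w, P v -> L0 w -> P (v + w).

Lemma cone_ind_shift k (l s : Lam) :
  L0 (latv s) -> cone_ind P sigma k (l + s) = cone_ind P sigma k l.
Proof.
have shift (m u : Lam) : L0 (latv u) ->
    (exists (t : R) (v : V), 0 < t /\ P v /\ k%:~R = t /\
       latv m = t *: v + map_mx (fun q : rat => ratr q) sigma) ->
    exists (t : R) (v : V), 0 < t /\ P v /\ k%:~R = t /\
       latv (m + u) = t *: v + map_mx (fun q : rat => ratr q) sigma.
  move=> Lu [t [v [t0 [Pv [kt mE]]]]]; exists t, (v + t^-1 *: latv u).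
  split=> //; split; first by apply: P_L0 => //; case: L0_lin => _ [_ LZ]; apply: LZ.
  by split=> //; rewrite latvD mE scalerDr scalerA divff ?gt_eqF // scale1r addrAC.
move=> Ls; rewrite /cone_ind; congr (if _ then _ else _).
apply: asbool_equiv_eq; split; last exact: shift.
move=> /(shift _ (- s)); rewrite addrK; apply.
by rewrite latvN; apply: lin_subspaceN.
Qed.

Lemma cone_ind_line k (l s : Lam) j :
  L0 (latv s) -> cone_ind P sigma k (l + s *+ j) = cone_ind P sigma k l.
Proof.
move=> Ls; elim: j => [|j ih]; first by rewrite addr0.
by rewrite mulrSr addrA cone_ind_shift.
Qed.

End Invariance.

Lemma normc_cone_ind_le1 (P : set V) sigma k l : Normc.normc (cone_ind P sigma k l) <= 1.
Proof. by rewrite /cone_ind; case: ifP; rewrite ?Normc.normc1 ?Normc.normc0. Qed.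

Lemma test_function_supp_bound (phi : V -> R) : test_function phi ->
  exists R1 : nat, forall x, phi x != 0 -> forall t, `|x 0 t| <= R1%:R.
Proof.
move=> [_ [_ supp_cpt]].
have [[c0 Kc0]|K0] := pselect (closure [set y | phi y != 0] !=set0); last first.
  by exists 0%N => x nz; exfalso; apply: K0; exists x; apply: subset_closure.
have cf : {within closure [set y | phi y != 0], continuous (fun x : V => `|x|)}.
  by apply: continuous_subspaceT => x; apply: norm_continuous.
have [c _ cmax] := compact_EVT_max (ex_intro _ c0 Kc0) supp_cpt cf.
exists (Num.Def.archi_bound `|c|) => x nz t.
apply: le_trans (ltW (archi_boundP (normr_ge0 c))).
apply: le_trans (_ : `|x| <= _); last by apply/cmax/mem_set/subset_closure.
rewrite [X in _ <= X]mx_normrE.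
exact: (le_bigmax _ (fun ij : 'I_1 * 'I_n => `|x ij.1 ij.2|) (0, t)).
Qed.

End Cone.

Lemma eventually_le_decay (R : realType) (f : nat -> R) (N : nat) (C0 : R) :
  (forall k, (0 < k)%N -> f k <= C0 * k%:R ^- N.+1) ->
  forall eps, 0 < eps -> exists K, forall k, (K <= k)%N -> f k <= eps * k%:R ^- N.
Proof.
move=> fC eps eps0; exists (Num.Def.archi_bound (`|C0| / eps)).+1 => k Kk.
have k0 : (0 < k)%N by apply: leq_trans Kk.
have Ck : C0 <= eps * k%:R.
  apply: le_trans (ler_norm C0) _; rewrite mulrC -ler_pdivrMr //.
  have C0e : 0 <= `|C0| / eps := divr_ge0 (normr_ge0 C0) (ltW eps0).
  apply: ltW; apply: (lt_le_trans (archi_boundP C0e)).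
  by rewrite ler_nat; apply: ltnW.
apply: le_trans (fC k k0) _; rewrite exprS invfM mulrA ler_wpM2r ?invr_ge0 ?exprn_ge0 //.
by rewrite ler_pdivrMr ?ltr0n.
Qed.

Section Estimate.
Variables (R : realType) (n : nat).
Local Notation V := 'rV[R]_n.
Local Notation Lam := 'rV[int]_n.
Local Notation C := (complex R).
Local Notation normc := (@Normc.normc R).

Variables (P L0 : set V) (sigma : 'rV[rat]_n) (p : int -> Lam -> C) (g : Lam -> C).
Variables (s : Lam) (phi : V -> R).
Hypothesis L0_lin : lin_subspace L0.
Hypothesis P_L0 : forall v w, P v -> L0 w -> P (v + w).
Hypothesis L0s : L0 (latv s).
Hypothesis gM : forall l mu, g (l + mu) = g l * g mu.
Hypothesis g_unit : forall l, normc (g l) = 1.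
Variable R1 : nat.
Hypothesis phi_supp : forall x, phi x != 0 -> forall t, `|x 0 t| <= R1%:R.
Variables (Bp : R) (A Dp D : nat).
Hypothesis Bp0 : 0 <= Bp.
Hypothesis p_le : forall (k K : nat) l, (0 < k)%N -> (0 < K)%N -> inbox K l ->
  normc (p k%:Z l) <= Bp * k%:R ^+ A * K%:R ^+ Dp.
Hypothesis p_deg : forall k l, deg_le D (fun j => p k (l + s *+ j)).
Variables (M : nat) (Bf : R).
Hypothesis Bf0 : 0 <= Bf.
Hypothesis phi_diff : forall b x0 e j, (b <= M)%N -> 0 <= e ->
  `|fdiffn b (fun j => phi (x0 + (j%:R * e) *: latv s)) j| <= e ^+ b * Bf.

Definition theta_term (k : nat) (l : Lam) : C :=
  p k%:Z l * cone_ind P sigma k%:Z l * Cof (phi (k%:R^-1 *: latv l)).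

Let m (k : int) (l : Lam) : C := g l * p k l * cone_ind P sigma k l.
Let S1 := (\max_(t < n) absz (s 0%R t))%N.
Let W := (R1 + 2 * M * S1 + 1)%N.
Let diff_bound (k : nat) : R :=
  2 ^+ M * (2 ^+ M * (Bp * k%:R ^+ A * (k * W)%:R ^+ Dp)) * Bf * k%:R^-1 ^+ (M - D).

Lemma Theta_pairE k :
  Theta_pair m k phi = \sum_(l \in [set: Lam]) g l * theta_term k l.
Proof. by apply: eq_fsbigr => l _; rewrite /theta_term !mulrA. Qed.

Lemma line_step_le t j : (j <= M)%N -> `|(s *+ j) 0 t| <= (M * S1)%:Z.
Proof.
move=> jM; rewrite mulmxnE normrMn -mulr_natr natz.
have : (absz (s 0%R t) <= S1)%N by apply: (leq_bigmax (F := fun t => absz (s 0%R t))).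
by rewrite -abszE -PoszM lez_nat mulnC => h; apply: leq_mul.
Qed.

Lemma theta_term_inbox k l : (0 < k)%N -> theta_term k l != 0 -> inbox (k * R1) l.
Proof.
move=> k0 nz t; have : phi (k%:R^-1 *: latv l) != 0.
  by apply: contraNneq nz => phi0; rewrite /theta_term phi0 Cof0 mulr0.
move/phi_supp/(_ t); rewrite !mxE normrM ger0_norm ?invr_ge0 //.
by rewrite ler_pdivrMl ?ltr0n // -intr_norm -natrM pmulrn ler_int.
Qed.

Lemma finite_supp_theta_term k : (0 < k)%N -> finite_set [set l | theta_term k l != 0].
Proof.
move=> k0; apply: sub_finite_set (finite_inbox n (k * R1)) => l.
exact: theta_term_inbox.
Qed.

Lemma ldiffn_theta_term_out k l : (0 < k)%N -> ~ inbox (k * R1 + M * S1) l ->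
  ldiffn M s (theta_term k) l = 0.
Proof.
move=> k0 lK; apply/eqP; apply: contra_notT lK => /ldiffn_neq0 [j jM].
move=> /(theta_term_inbox k0) ljK t; have := ljK t; rewrite mxE => lj.
rewrite -(addrK ((s *+ j) 0 t) (l 0 t)) PoszD.
exact: le_trans (ler_normB _ _) (lerD lj (line_step_le t jM)).
Qed.

Lemma theta_term_line k l j : theta_term k (l + s *+ j) = cone_ind P sigma k%:Z l *
  (p k%:Z (l + s *+ j) * Cof (phi (k%:R^-1 *: latv l + (j%:R * k%:R^-1) *: latv s))).
Proof.
rewrite /theta_term (cone_ind_line _ L0_lin P_L0 _ _ _ L0s) latvD latvMn scalerDr.
rewrite -scalerMnr scalerMnl.
by rewrite -[k%:R^-1 *+ j]mulr_natr [_ * j%:R]mulrC; ring.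
Qed.

Lemma p_line_le k l j : (0 < k)%N -> inbox (k * R1 + M * S1) l -> (j <= M)%N ->
  normc (p k%:Z (l + s *+ j)) <= Bp * k%:R ^+ A * (k * W)%:R ^+ Dp.
Proof.
move=> k0 lK jM; apply: p_le => [//||t]; first by rewrite muln_gt0 k0 /W addn1.
rewrite mxE; apply: le_trans (ler_normD _ _) _.
apply: le_trans (lerD (lK t) (line_step_le t jM)) _.
by rewrite -PoszD lez_nat /W; nia.
Qed.

Lemma ldiffn_theta_term_le k l : (0 < k)%N -> inbox (k * R1 + M * S1) l ->
  normc (ldiffn M s (theta_term k) l) <= diff_bound k.
Proof.
move=> k0 lK.
have -> : ldiffn M s (theta_term k) l = fdiffn M (fun i => theta_term k (l + s *+ i)) 0.
  by rewrite -ldiffn_line mulr0n addr0.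
under eq_fun do rewrite theta_term_line.
rewrite fdiffnZ Normc.normcM.
apply: le_trans (ler_piMl (normc_ge0 _) (normc_cone_ind_le1 _ _ _ _)) _.
have e01 : 0 <= (k%:R^-1 : R) <= 1.
  by rewrite invr_ge0 (ler0n R) /= invf_le1 ?ler1n ?ltr0n.
apply: (normc_fdiffnM_le (T := M)) => //; rewrite ?mulr_ge0 ?exprn_ge0 //.
- move=> i j ijM; apply: le_trans (normc_fdiffn_le _ ijM) _.
    by move=> h hM; apply: p_line_le.
  by rewrite ler_wpM2r ?mulr_ge0 ?exprn_ge0 // ler_eXn2l // ?ltr1n; lia.
- move=> i j ijM; rewrite fdiffn_Cof normc_Cof mulrC; apply: phi_diff; first lia.
  by case/andP: e01.
by rewrite addn0.
Qed.

Lemma Theta_pair_le k : (0 < k)%N ->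
  normc (Theta_pair m k phi) * normc (g (- s) - 1) ^+ M <=
  ((k * R1 + M * S1).*2.+1 ^ n)%:R * diff_bound k.
Proof.
move=> k0; rewrite -normcX -Normc.normcM mulrC Theta_pairE.
rewrite -fsum_ldiffn //; last exact: finite_supp_theta_term.
apply: normc_fsum_box_le => [|l lK|l lK].
- by rewrite /diff_bound !mulr_ge0 ?exprn_ge0.
- by rewrite ldiffn_theta_term_out // mulr0.
- by rewrite Normc.normcM g_unit mul1r; apply: ldiffn_theta_term_le.
Qed.

Lemma Theta_pair_decay : (n + A + Dp + D <= M)%N -> exists C0, forall k, (0 < k)%N ->
  normc (Theta_pair m k phi) * normc (g (- s) - 1) ^+ M <=
  C0 * k%:R ^- (M - (n + A + Dp + D)).
Proof.
move=> MD; exists ((2 * W)%:R ^+ n * 4 ^+ M * Bp * W%:R ^+ Dp * Bf) => k k0.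
apply: le_trans (Theta_pair_le k0) _.
have kR0 : k%:R != 0 :> R by rewrite pnatr_eq0 -lt0n.
apply: le_trans (_ : _ <= (2 * k * W)%:R ^+ n * diff_bound k) _.
  rewrite ler_wpM2r /diff_bound ?mulr_ge0 ?exprn_ge0 // natrX lerXn2r ?nnegrE //.
  by rewrite ler_nat /W; nia.
rewrite /diff_bound (_ : (M - D = (M - (n + A + Dp + D)) + (n + A + Dp))%N); last lia.
rewrite le_eqVlt; apply/orP; left; apply/eqP.
rewrite !natrM !exprMn !exprD !exprVn (_ : 4 = 2 * 2 :> R) ?exprMn; last by ring.
by field; rewrite !expf_neq0.
Qed.

End Estimate.

Theorem proposition4p2 (R : realType) (n : nat)
  (P : set 'rV[R]_n) (L0 : set 'rV[R]_n) (sigma : 'rV[rat]_n)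
  (p : int -> 'rV[int]_n -> complex R) (g : 'rV[int]_n -> complex R) :
  rational_polyhedron P ->
  rational_subspace L0 ->
  (forall v l, P v -> L0 l -> P (v + l)) ->
  quasi_poly p -> poly_in_lambda p ->
  fin_order_char g ->
  (exists l mu : 'rV[int]_n, L0 (latv l) /\ L0 (latv mu) /\ g l != g mu) ->
  asymp_zero (fun k l => g l * p k l * cone_ind P sigma k l).
Proof.
move=> _ [L0_lin _] P_L0 p_qp p_poly [gM [g_unit _]] [l [mu [L0l [L0mu gl_mu]]]].
pose s := l - mu.
have L0s : L0 (latv s) by rewrite latvD latvN; apply: lin_subspaceB.
have gs1 : 0 < Normc.normc (g (- s) - 1).
  rewrite lt0r normc_eq0 normc_ge0 andbT subr_eq0 opprB.
  by apply: contraNneq gl_mu => g1; rewrite -[mu](subrK l) gM g1 mul1r.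
move=> phi phi_test N.
have [R1 phi_supp] := test_function_supp_bound phi_test.
have [Bp [A [Dp [Bp0 p_le]]]] := quasi_poly_bounded p_qp.
have [D p_deg] := quasi_poly_line_deg p_qp p_poly.
pose M := (n + A + Dp + D + N.+1)%N.
have [Bf Bf0 phi_diff] := test_function_fdiffn_le (latv s) M phi_test.
have [C0 decay] := Theta_pair_decay sigma L0_lin P_L0 L0s gM g_unit phi_supp Bp0 p_le
  (fun k l => p_deg k l s) Bf0 phi_diff (leq_addr _ _).
apply: (eventually_le_decay (C0 := C0 / Normc.normc (g (- s) - 1) ^+ M)) => k k0.
by rewrite mulrAC ler_pdivlMr ?exprn_gt0 // -[N.+1](addKn (n + A + Dp + D)) decay.
Qed.
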